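(* Under the hypotheses of the convergence-in-the-Bregman-distance theorem ($\delta>0$; (A), (B), (R), (D); $\theta^*$ the unique minimizer of $\mathcal{L}$ with $J(\theta^* )<\infty$; $d_k:=\mathbb{E}[D^{v^{(k)}}_{J_\delta}(\theta^*,\theta^{(k)})]$), there exist constants $c>0$ and $C>0$ such that if $\tau^{(k)}=\frac{c}{k+1}$ for all $k\ge0$, then $d_k\le\frac{C}{k+1}$ for all $k\ge0$.
   Context: $\Theta$ is a real Hilbert space. For a convex proper $J:\Theta\to(-\infty,\infty]$, $\partial J$ is its subdifferential and for $p\in\partial J(\theta)$, $D^p_J(\bar\theta,\theta)=J(\bar\theta)-J(\theta)-\langle p,\bar\theta-\theta\rangle$. $\mathrm{prox}_F(\bar\theta)=\arg\min_\theta\frac12\|\theta-\bar\theta\|^2+F(\theta)$; $J_\delta(\theta)=J(\theta)+\frac1{2\delta}\|\theta\|^2$. (R): $J$ convex, proper, lower semicontinuous. $(\Omega,F,\mathbb{P})$ probability space; $\mathcal{L}:\Theta\to\mathbb{R}$ Fréchet differentiable; $g:\Theta\times\Omega\to\Theta$ with $\mathbb{E}_\omega[g(\theta;\omega)]=\nabla\mathcal{L}(\theta)$. Iteration: deterministic $\theta^{(0)}$, $v^{(0)}\in\partial J_\delta(\theta^{(0)})$; $\omega^{(k)}$ independent with law $\mathbb{P}$; $g^{(k)}=g(\theta^{(k)};\omega^{(k)})$, $v^{(k+1)}=v^{(k)}-\tau^{(k)}g^{(k)}$, $\theta^{(k+1)}=\mathrm{prox}_{\delta J}(\delta v^{(k+1)})$;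 then $v^{(k)}\in\partial J_\delta(\theta^{(k)})$. All expectations appearing are assumed finite. (A): $\mathcal{L}\ge0$, continuously differentiable, $\nabla\mathcal{L}$ $L$-Lipschitz with $L\in(0,\infty)$. (B): $\exists\sigma>0$: $\mathbb{E}_\omega\|g(\theta;\omega)-\nabla\mathcal{L}(\theta)\|^2\le\sigma^2$ for all $\theta$. (D): $\exists\nu>0$: $\mathcal{L}(\tilde\theta)\ge\mathcal{L}(\theta)+\langle\nabla\mathcal{L}(\theta),\tilde\theta-\theta\rangle+\nu D^v_{J_\delta}(\tilde\theta,\theta)$ for all $\theta,\tilde\theta$, $v\in\partial J_\delta(\theta)$. *)

From HB Require Import structures.
From mathcomp Require Import all_boot all_order all_algebra.
From mathcomp Require Import all_classical all_reals all_analysis.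
Set Implicit Arguments. Unset Strict Implicit. Unset Printing Implicit Defensive.
Import Order.TTheory GRing.Theory Num.Theory.
Import numFieldNormedType.Exports.
Local Open Scope classical_set_scope.
Local Open Scope ring_scope.

Section Defs.
Context {R : realType} {V : normedModType R}.

Definition is_inner_product (ip : V -> V -> R) : Prop :=
  [/\ (forall x y, ip x y = ip y x),
      (forall (a : R) x y z, ip (a *: x + y) z = a * ip x z + ip y z) &
      (forall x, ip x x = `|x| ^+ 2)].

Definition convex_fun (J : V -> \bar R) : Prop :=
  forall x y (t : R), 0 < t < 1 ->
    (J (t *: x + (1 - t) *: y)%R <= t%:E * J x + (1 - t)%R%:E * J y)%E.
Definition proper_fun (J : V -> \bar R) : Prop :=
  (forall x, J x != -oo%E) /\ (exists x, (J x < +oo)%E).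
Definition lsc_fun (J : V -> \bar R) : Prop :=
  forall a : R, closed [set x | (J x <= a%:E)%E].

Definition subdiff (ip : V -> V -> R) (J : V -> \bar R) (th p : V) : Prop :=
  forall t, (J th + (ip p (t - th)%R)%:E <= J t)%E.

Definition bregman (ip : V -> V -> R) (J : V -> \bar R) (p thb th : V) : \bar R :=
  (J thb - J th - (ip p (thb - th)%R)%:E)%E.

Definition Jdelta (J : V -> \bar R) (delta : R) (th : V) : \bar R :=
  (J th + ((2 * delta)^-1 * `|th| ^+ 2)%R%:E)%E.

Definition is_prox (F : V -> \bar R) (thb th : V) : Prop :=
  forall t, (((2^-1) * `|th - thb| ^+ 2)%R%:E + F th
             <= ((2^-1) * `|t - thb| ^+ 2)%R%:E + F t)%E.

Definition frechet_gradient (ip : V -> V -> R) (L : V -> R) (gL : V -> V) : Prop :=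
  forall th, differentiable L th /\ (forall h, 'd L th h = ip (gL th) h).

Definition borel_measurable_to {d} {Om : measurableType d} (f : Om -> V) : Prop :=
  forall U : set V, open U -> measurable (f @^-1` U).

End Defs.

(* Expectation of a function of the first k draws omega^(0), ..., omega^(k-1)
   (given as the history list h, size h = k) where the draws are independent
   with law P: iterated integral, the last draw being integrated innermost. *)
Fixpoint expect_hist {d} {Om : measurableType d} {R : realType}
    (P : probability Om R) (k : nat) (f : seq Om -> \bar R) : \bar R :=
  match k with
  | 0 => f [::]
  | k'.+1 => expect_hist P k' (fun h => (\int[P]_w f (rcons h w))%E)
  end.

From HB Require Import structures.
From mathcomp Require Import all_boot all_order all_algebra.
From mathcomp Require Import all_classical all_reals all_analysis.
From mathcomp Require Import ring lra.
Import Order.TTheory GRing.Theory Num.Theory.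
Import numFieldNormedType.Exports.
Local Open Scope classical_set_scope.
Local Open Scope ring_scope.

(* Write D_k = D^{v_k}_{J_delta}(theta*, theta_k).  J_delta is (1/delta)-strongly convex: a subgradient v
      at theta satisfies J_delta(t) >= J_delta(theta) + <v, t - theta>
      + |t - theta|^2/(2 delta), and the prox step makes v_{k+1} a subgradient
      at theta_{k+1}.  With Young's inequality this bounds D_{k+1} pointwise
      by D_k, a term linear in g_k and the noise |g_k - grad L(theta_k)|^2.
   2. One step in expectation.  Integrating over the fresh draw (unbiasedness
      and (B)), then using (D), minimality of theta* and the Lipschitz bound on
      grad L, gives for c = 2/nu
        E[D_{k+1} | history] <= a_k D_k + b_k,
      a_k = 1 - 2/(k+1) + M/(k+1)^2,  b_k = Q/(k+1)^2.
   3. Unrolling.  Iterated expectation over the history turns this into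
      E[D_k] <= u_k, where u_{k+1} = a_k u_k + b_k, and an elementary
      induction shows that (k+1) u_k is bounded.
   The iterates are not assumed measurable in the history, so integrals are
   only used through monotonicity, and the one-step estimate is propagated in
   the form  E[A D_{k+1} + B] <= A (a_k D_k + b_k) + B  for all A, B >= 0.
   The file follows this order: inner-product algebra, convex analysis of
   J_delta (sections InnerProduct, Convexity), the scalar recursion
   (AffineRecursion), integrals over the draws (Expectation), the one-step
   estimate (OneStep), and finally the theorem. *)

Lemma le_of_le_add_small {R : realFieldType} (x y z : R) : 0 <= z ->
  (forall s, 0 < s < 1 -> x <= y + s * z) -> x <= y.
Proof.
move=> z0 small; apply/ler_addgt0Pr => e e0.
have den0 : 0 < z + e + 1 by lra.
have s01 : 0 < e / (z + e + 1) < 1.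
  by rewrite divr_gt0 //= ltr_pdivrMr // mul1r; lra.
apply: le_trans (small _ s01) _; rewrite lerD2l mulrAC ler_pdivrMr //.
by rewrite ler_wpM2l ?(ltW e0) //; lra.
Qed.

Section InnerProduct.
Context {R : realType} {V : normedModType R} {ip : V -> V -> R}.
Hypothesis Hip : is_inner_product ip.

Lemma ipC x y : ip x y = ip y x. Proof. by case: Hip. Qed.
Lemma ipxx x : ip x x = `|x| ^+ 2. Proof. by case: Hip. Qed.

Lemma ipDl x y z : ip (x + y) z = ip x z + ip y z.
Proof. by case: Hip => _ lin _; have := lin 1 x y z; rewrite scale1r mul1r. Qed.

Lemma ipZl a x z : ip (a *: x) z = a * ip x z.
Proof.
case: Hip => _ lin _; have := lin a x 0 z; rewrite addr0 => ->.
suff -> : ip 0 z = 0 by rewrite addr0.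
by have := ipDl 0 0 z; rewrite addr0; lra.
Qed.

Lemma ipNl x z : ip (- x) z = - ip x z.
Proof. by rewrite -scaleN1r ipZl mulN1r. Qed.
Lemma ipBl x y z : ip (x - y) z = ip x z - ip y z.
Proof. by rewrite ipDl ipNl. Qed.
Lemma ipDr x y z : ip z (x + y) = ip z x + ip z y.
Proof. by rewrite ipC ipDl !(ipC z). Qed.
Lemma ipZr a x z : ip z (a *: x) = a * ip z x.
Proof. by rewrite ipC ipZl (ipC z). Qed.
Lemma ipNr x z : ip z (- x) = - ip z x.
Proof. by rewrite ipC ipNl (ipC z). Qed.
Lemma ipBr x y z : ip z (x - y) = ip z x - ip z y.
Proof. by rewrite ipDr ipNr. Qed.

Definition ipE := (ipBl, ipBr, ipDl, ipDr, ipZl, ipZr, ipNl, ipNr).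

Lemma ipxx_ge0 x : 0 <= ip x x.
Proof. by rewrite ipxx sqr_ge0. Qed.

Lemma young (d s : R) x y : 0 < d ->
  s * ip x y <= (d * s ^+ 2 / 2) * ip x x + (2 * d)^-1 * ip y y.
Proof.
move=> d0; have sq := ipxx_ge0 ((d * s) *: x - y).
rewrite !(ipBl, ipBr, ipZl, ipZr) (ipC y x) in sq.
have d2 : 2 * d != 0 by rewrite lt0r_neq0 //; lra.
rewrite -(ler_pM2l (_ : 0 < 2 * d)); last by lra.
by rewrite mulrDr !mulrA (mulfV d2); lra.
Qed.

End InnerProduct.

Lemma sqr_norm_le {R : realFieldType} {V : normedModType R} (x y : V) :
  `|x| ^+ 2 <= 2 * `|y| ^+ 2 + 2 * `|x - y| ^+ 2.
Proof.
have tri : `|x| <= `|y| + `|x - y|.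
  by rewrite -[x in `|x|](addrNK y) addrC ler_normD.
have sq := ler_pM (normr_ge0 x) (normr_ge0 x) tri tri.
have := sqr_ge0 (`|y| - `|x - y|); rewrite !expr2 in sq *; lra.
Qed.

Definition jdelta {R : realType} {V : normedModType R} (J : V -> \bar R)
  (delta : R) (t : V) : R := fine (J t) + (2 * delta)^-1 * `|t| ^+ 2.

Definition bregmanR {R : realType} {V : normedModType R} (ip : V -> V -> R)
    (J : V -> \bar R) (delta : R) (v t th : V) : R :=
  jdelta J delta t - jdelta J delta th - ip v (t - th).

Definition noise_weight {R : realFieldType} (delta tau : R) : R :=
  delta * tau ^+ 2 / 2.

Lemma noise_weight_ge0 {R : realFieldType} {delta tau : R} :
  0 <= delta -> 0 <= noise_weight delta tau.
Proof. by move=> d0; rewrite /noise_weight divr_ge0 // mulr_ge0 ?sqr_ge0. Qed.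

Section Convexity.
Context {R : realType} {V : normedModType R} {ip : V -> V -> R}.
Context {J : V -> \bar R} {delta : R}.
Hypotheses (Hip : is_inner_product ip) (d0 : 0 < delta).
Hypotheses (cJ : convex_fun J) (pJ : proper_fun J).

Lemma JdeltaE t : J t \is a fin_num -> Jdelta J delta t = (jdelta J delta t)%:E.
Proof. by move=> ft; rewrite /Jdelta /jdelta EFinD fineK. Qed.

Lemma bregmanE v t th : J t \is a fin_num -> J th \is a fin_num ->
  bregman ip (Jdelta J delta) v t th = (bregmanR ip J delta v t th)%:E.
Proof. by move=> ft fth; rewrite /bregman !JdeltaE // -!EFinB. Qed.

Lemma fin_of_ltey t : (J t < +oo)%E -> J t \is a fin_num.
Proof. by move=> lt; rewrite fin_numE (proj1 pJ t) /= -ltey. Qed.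

Lemma convex_fin {x y s} : 0 < s < 1 -> J x \is a fin_num -> J y \is a fin_num ->
  J (s *: x + (1 - s) *: y) \is a fin_num /\
  fine (J (s *: x + (1 - s) *: y)) <= s * fine (J x) + (1 - s) * fine (J y).
Proof.
move=> s01 fx fy; have cvx := cJ x y s s01.
rewrite -(fineK fx) -(fineK fy) -!EFinM -EFinD in cvx.
have fs : J (s *: x + (1 - s) *: y) \is a fin_num.
  by apply: fin_of_ltey; apply: le_lt_trans cvx _; rewrite ltey.
by split=> //; rewrite -(fineK fs) lee_fin in cvx.
Qed.

Lemma subdiff_fin {th v} : subdiff ip (Jdelta J delta) th v -> J th \is a fin_num.
Proof.
move=> sub; rewrite fin_numE (proj1 pJ th) /=; apply/negP => /eqP Jinf.
case: (proj2 pJ) => x /fin_of_ltey fx.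
have := sub x; rewrite /Jdelta Jinf !addye // leye_eq.
by rewrite -(fineK fx) -EFinD.
Qed.

Lemma subdiff_strong {th v t} : subdiff ip (Jdelta J delta) th v ->
  J t \is a fin_num ->
  jdelta J delta th + ip v (t - th) + (2 * delta)^-1 * `|t - th| ^+ 2
  <= jdelta J delta t.
Proof.
move=> sub ft; have fth := subdiff_fin sub.
apply: (@le_of_le_add_small _ _ _ ((2 * delta)^-1 * `|t - th| ^+ 2)).
  by rewrite mulr_ge0 ?sqr_ge0 // invr_ge0 mulr_ge0 // ltW.
move=> s s01; have [fs cvx] := convex_fin s01 ft fth.
have := sub (s *: t + (1 - s) *: th).
rewrite !JdeltaE // lee_fin /jdelta -!(ipxx Hip) => subs.
move: cvx subs; set q := (2 * delta)^-1.
set js := fine (J (s *: t + (1 - s) *: th)).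
set jt := fine (J t); set jth := fine (J th).
rewrite !(ipE Hip) (ipC Hip th t).
case/andP: s01 => s0 s1 cvx subs.
by rewrite -(ler_pM2l s0); lra.
Qed.

Lemma bregmanR_lb {th v t} : subdiff ip (Jdelta J delta) th v ->
  J t \is a fin_num ->
  (2 * delta)^-1 * `|t - th| ^+ 2 <= bregmanR ip J delta v t th.
Proof. by move=> sub ft; have := subdiff_strong sub ft; rewrite /bregmanR; lra. Qed.

Lemma bregmanR_ge0 {th v t} : subdiff ip (Jdelta J delta) th v ->
  J t \is a fin_num -> 0 <= bregmanR ip J delta v t th.
Proof.
move=> sub ft; apply: le_trans (bregmanR_lb sub ft).
by rewrite mulr_ge0 ?sqr_ge0 // invr_ge0 mulr_ge0 // ltW.
Qed.

Lemma prox_subdiff {th v} :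
  is_prox (fun t => (delta%:E * J t)%E) (delta *: v) th ->
  subdiff ip (Jdelta J delta) th v.
Proof.
move=> prox.
have fth : J th \is a fin_num.
  rewrite fin_numE (proj1 pJ th) /=; apply/negP => /eqP Jinf.
  case: (proj2 pJ) => x /fin_of_ltey fx.
  have := prox x; rewrite Jinf gt0_muley ?lte_fin // addey // leye_eq.
  by rewrite -(fineK fx) -EFinM -EFinD.
move=> t; have [ft|] := boolP (J t \is a fin_num); last first.
  rewrite fin_numE (proj1 pJ t) /= => /negPn/eqP Jinf.
  by rewrite /Jdelta Jinf addye // leey.
rewrite !JdeltaE // lee_fin; set jt := fine (J t); set jth := fine (J th).
have first_order :
    delta * jth <= ip th (t - th) - delta * ip v (t - th) + delta * jt.
  apply: (@le_of_le_add_small _ _ _ (ip (t - th) (t - th) / 2)).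
    by rewrite divr_ge0 // ipxx_ge0.
  move=> s s01; have [fs cvx] := convex_fin s01 ft fth.
  have := prox (s *: t + (1 - s) *: th).
  rewrite -(fineK fth) -(fineK fs) -!EFinM -!EFinD lee_fin -!(ipxx Hip) -/jth.
  have dcvx := ler_wpM2l (ltW d0) cvx.
  move: dcvx; rewrite -/jt -/jth; set js := fine (J (s *: t + (1 - s) *: th)).
  rewrite !(ipE Hip).
  rewrite (ipC Hip th t) (ipC Hip v t) (ipC Hip v th).
  case/andP: s01 => s0 s1 dcvx proxs.
  by rewrite -(ler_pM2l s0); lra.
have sq := ipxx_ge0 Hip (t - th).
have d2 : 2 * delta != 0 by rewrite lt0r_neq0 // mulr_gt0.
rewrite /jdelta -!(ipxx Hip) -/jth -/jt.
rewrite -(ler_pM2l (_ : 0 < 2 * delta)); last by rewrite mulr_gt0.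
rewrite !mulrDr !mulrA (mulfV d2).
move: first_order sq.
rewrite !(ipE Hip).
rewrite (ipC Hip th t) (ipC Hip v t) (ipC Hip v th).
lra.
Qed.

Lemma bregman_step {th th' t v gw gr : V} {tau : R} :
  subdiff ip (Jdelta J delta) th v ->
  subdiff ip (Jdelta J delta) th' (v - tau *: gw) ->
  bregmanR ip J delta (v - tau *: gw) t th' <=
  bregmanR ip J delta v t th - noise_weight delta tau * `|gr| ^+ 2
  + ip gw (tau *: (t - th) + (2 * noise_weight delta tau) *: gr)
  + noise_weight delta tau * `|gw - gr| ^+ 2.
Proof.
move=> sub sub'; have strong := subdiff_strong sub (subdiff_fin sub').
have yg := young Hip delta tau gw (th - th') d0.
move: strong yg; rewrite /bregmanR /noise_weight -!(ipxx Hip).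
rewrite !(ipE Hip).
rewrite ?(ipC Hip th' th) ?(ipC Hip gr gw).
lra.
Qed.

End Convexity.

Section AffineRecursion.
Context {R : realType}.
Implicit Types (a b : nat -> R) (j m : nat) (x : R).

Fixpoint affine_iter a b j m x : R :=
  if m is m'.+1 then affine_iter a b j.+1 m' (a j * x + b j) else x.

Lemma affine_iterS a b j m x :
  affine_iter a b j m.+1 x = a (j + m)%N * affine_iter a b j m x + b (j + m)%N.
Proof.
elim: m j x => [|m IH] j x; first by rewrite addn0.
by rewrite [LHS]IH addSnnS.
Qed.

Lemma affine_iterE a b j m x :
  affine_iter a b j m x
  = (\prod_(j <= i < j + m) a i) * x + affine_iter a b j m 0.
Proof.
elim: m j x => [|m IH] j x; first by rewrite addn0 big_geq // mul1r addr0.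
rewrite /= IH [in RHS]IH addnS -addSn (big_ltn (m := j)); first ring.
by rewrite addSn ltnS leq_addr.
Qed.

Lemma affine_iter_ge0 a b j m x : (forall i, 0 <= a i) -> (forall i, 0 <= b i) ->
  0 <= x -> 0 <= affine_iter a b j m x.
Proof.
move=> a0 b0; elim: m j x => [|m IH] j x x0 //=.
by apply: IH; rewrite addr_ge0 ?mulr_ge0.
Qed.

Definition step_contraction (M : R) (k : nat) : R :=
  Num.max 0 (1 - 2 / k.+1%:R + M / k.+1%:R ^+ 2).
Definition step_noise (Q : R) (k : nat) : R := Q / k.+1%:R ^+ 2.

Lemma step_contraction_ge0 M k : 0 <= step_contraction M k.
Proof. by rewrite /step_contraction le_max lexx. Qed.

Lemma step_noise_ge0 {Q} : 0 <= Q -> forall k, 0 <= step_noise Q k.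
Proof. by move=> Q0 k; rewrite /step_noise divr_ge0 ?sqr_ge0. Qed.

Lemma rate_step (M Q W n y : R) : 0 <= M -> 4 * M + 3 <= n -> 4 * Q <= W ->
  0 <= y -> n * y <= W ->
  (n + 1) * (Num.max 0 (1 - 2 / n + M / n ^+ 2) * y + Q / n ^+ 2) <= W.
Proof.
move=> M0 nM QW y0 nyW; have n0 : 0 < n by lra.
have nn : n != 0 by rewrite lt0r_neq0.
set p := n ^+ 2 - 2 * n + M.
have p0 : 0 <= p by rewrite /p; nra.
have -> : Num.max 0 (1 - 2 / n + M / n ^+ 2) = p / n ^+ 2.
  have -> : 1 - 2 / n + M / n ^+ 2 = p / n ^+ 2 by rewrite /p; field.
  by apply/max_idPr; rewrite divr_ge0 ?sqr_ge0.
have -> : (n + 1) * (p / n ^+ 2 * y + Q / n ^+ 2)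
        = (n + 1) * (p * (n * y) + n * Q) / n ^+ 3 by field.
rewrite ler_pdivrMr ?exprn_gt0 //.
have pyW := ler_wpM2l p0 nyW.
have slack : 0 <= 3 * n ^+ 2 + 7 * n - 4 * M * (n + 1) by nra.
have W0 : 0 <= W by nra.
have Wslack := mulr_ge0 W0 slack.
have npy : (n + 1) * (p * (n * y)) <= (n + 1) * (p * W) by rewrite ler_wpM2l //; lra.
have nQ : (n + 1) * (n * Q) <= (n + 1) * (n * W / 4) by rewrite ler_wpM2l //; nra.
move: npy nQ Wslack; rewrite /p !exprSr !expr0 !mul1r.
lra.
Qed.

Lemma affine_iter_rate (M Q u0 : R) : 0 <= M -> 0 < Q -> 0 <= u0 ->
  exists C, 0 < C /\ forall k,
    affine_iter (step_contraction M) (step_noise Q) 0 k u0 <= C / k.+1%:R.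
Proof.
move=> M0 Q0 u00; set a := step_contraction M; set b := step_noise Q.
have a0 := step_contraction_ge0 M; have b0 := step_noise_ge0 (ltW Q0).
set u := fun k => affine_iter a b 0 k u0.
have u_ge0 k : 0 <= u k by exact: affine_iter_ge0.
set w := fun k => k.+1%:R * u k.
have w_ge0 k : 0 <= w k by rewrite mulr_ge0.
have [K hK] : exists K : nat, 4 * M + 3 <= K%:R.
  by exists (Num.Def.archi_bound (4 * M + 3)); apply/ltW/archi_boundP; lra.
set W := Num.max (4 * Q) (\sum_(i < K.+1) w i).
have init k : (k <= K)%N -> w k <= W.
  move=> kK; rewrite le_max; apply/orP; right.
  rewrite (bigD1 (Ordinal (kK : (k < K.+1)%N))) //= lerDl.
  by apply: sumr_ge0 => i _.
have wW k : w k <= W.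
  elim: k => [|k IH]; first exact: init.
  have [kK|Kk] := leqP k.+1 K; first exact: init.
  have nK : 4 * M + 3 <= k.+1%:R by apply: le_trans hK _; rewrite ler_nat ltnW.
  rewrite /w /u affine_iterS add0n -/(u k) -[k.+2]addn1 natrD.
  by apply: rate_step => //; rewrite le_max lexx.
exists W; split.
  by apply: lt_le_trans (_ : 0 < 4 * Q) _; rewrite ?le_max ?lexx //; lra.
by move=> k; rewrite ler_pdivlMr // mulrC; exact: wW.
Qed.

End AffineRecursion.

Section Expectation.
Context {dO : measure_display} {Om : measurableType dO} {R : realType}.

(* Monotonicity of the integral of nonnegative functions; no measurability is
   needed since the integral is a supremum over simple minorants. *)
Lemma ge0_integral_mono (mu : {measure set Om -> \bar R}) {f g : Om -> \bar R} :
  (forall x, (0 <= f x)%E) -> (forall x, (f x <= g x)%E) ->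
  (\int[mu]_x f x <= \int[mu]_x g x)%E.
Proof.
move=> f0 fg; have g0 x : (0 <= g x)%E by apply: le_trans (f0 x) (fg x).
rewrite !ge0_integralTE //; apply: ereal_sup_le => _ [h hf <-].
by exists h => // x; apply: le_trans (hf x) (fg x).
Qed.

Lemma expect_hist_ge0 (P : probability Om R) k (f : seq Om -> \bar R) :
  (forall h, (0 <= f h)%E) -> (0 <= expect_hist P k f)%E.
Proof.
elim: k f => [|k IH] f f0 //=.
by apply: IH => h; apply: integral_ge0 => w _.
Qed.

Lemma expect_hist_cons (P : probability Om R) k (f : seq Om -> \bar R) :
  expect_hist P k.+1 f = (\int[P]_w expect_hist P k (fun h => f (w :: h)))%E.
Proof. by elim: k f => [|k IH] f //; rewrite [LHS]IH. Qed.

Lemma measurable_sqr_dist {V : normedModType R} (f : Om -> V) (a : V) :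
  borel_measurable_to f -> measurable_fun setT (fun w => `|f w - a| ^+ 2).
Proof.
move=> mf; apply: (measurability _ (measurable_realfun.RGenOpens.measurableE R)).
move=> _ [_ [x [y ->]] <-]; rewrite setTI.
have cont : continuous (fun z : V => `|z - a| ^+ 2).
  move=> z; apply: (continuous_comp (f := fun z => `|z - a|) (g := fun r => r ^+ 2)).
    apply: (continuous_comp (f := fun z => z - a) (g := Num.norm)).
      by apply: cvgB; [exact: cvg_id | exact: cvg_cst].
    exact: norm_continuous.
  exact: exprn_continuous.
have : open ((fun z : V => `|z - a| ^+ 2) @^-1` `]x, y[).
  by move/continuousP : cont; apply; apply: interval_open.
by move/mf.
Qed.

(* Expectation of the pointwise one-step bound: the linear term averages to
   the true gradient gr and the deviation term is bounded by the variance. *)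
Lemma integral_step_bound {V : normedModType R} {ip : V -> V -> R}
    {P : probability Om R} {gw : Om -> V} {gr d : V} {A B D tau kap sig : R} :
  is_inner_product ip -> borel_measurable_to gw ->
  (forall h, P.-integrable setT (fun w => (ip (gw w) h)%:E)) ->
  (forall h, (\int[P]_w (ip (gw w) h)%:E = (ip gr h)%:E)%E) ->
  (\int[P]_w (`|gw w - gr| ^+ 2)%:E <= (sig ^+ 2)%:E)%E ->
  0 <= A -> 0 <= kap ->
  (\int[P]_w ((A * (D - kap * `|gr| ^+ 2 + ip (gw w) (tau *: d + (2 * kap) *: gr)
                    + kap * `|gw w - gr| ^+ 2) + B)%:E)
   <= (A * (D + tau * ip gr d + kap * (`|gr| ^+ 2 + sig ^+ 2)) + B)%:E)%E.
Proof.
move=> Hip mgw igw mean var A0 kap0; set z := tau *: d + (2 * kap) *: gr.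
have isq : P.-integrable setT (fun w => (`|gw w - gr| ^+ 2)%:E).
  apply/integrableP; split.
    exact/measurable_realfun.measurable_EFinP/measurable_sqr_dist.
  under eq_integral => x _ do rewrite gee0_abs ?lee_fin ?sqr_ge0 //.
  by apply: le_lt_trans var _; rewrite ltry.
have -> : (fun w => (A * (D - kap * `|gr| ^+ 2 + ip (gw w) z
                            + kap * `|gw w - gr| ^+ 2) + B)%:E)
  = (fun w => (A * (D - kap * `|gr| ^+ 2) + B)%:E
       + ((ip (gw w) (A *: z))%:E + (A * kap)%:E * (`|gw w - gr| ^+ 2)%:E))%E.
  by apply: funext => w; rewrite (ipZr Hip) -EFinM -!EFinD; congr (_%:E); ring.
rewrite integralD //; last 2 first.
- exact: finite_measure_integrable_cst.
- exact: (integrableD measurableT (igw _) (integrableZl measurableT _ isq)).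
rewrite integralD //; last exact: (integrableZl measurableT _ isq).
rewrite integral_cst // [X in (_ * X)%E]probability_setT mule1 mean integralZl //.
set S := (\int[P]_w (`|gw w - gr| ^+ 2)%:E)%E in var *.
have S0 : (0 <= S)%E by apply: integral_ge0 => w _; rewrite lee_fin sqr_ge0.
have fS : S \is a fin_num.
  by rewrite ge0_fin_numE //; apply: le_lt_trans var _; rewrite ltry.
move: var; rewrite -(fineK fS) -EFinM -!EFinD !lee_fin => var.
have Akap := ler_wpM2l (mulr_ge0 A0 kap0) var.
rewrite (ipZr Hip) /z (ipDr Hip) !(ipZr Hip) (ipxx Hip).
lra.
Qed.

Lemma expect_hist_affine {P : probability Om R} {F : seq Om -> R} {a b : nat -> R} :
  (forall i, 0 <= a i) -> (forall i, 0 <= b i) -> (forall h, 0 <= F h) ->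
  (forall h A B, 0 <= A -> 0 <= B ->
    (\int[P]_w (A * F (rcons h w) + B)%:E
     <= (A * (a (size h) * F h + b (size h)) + B)%:E)%E) ->
  forall m h, (expect_hist P m (fun h' => (F (h ++ h'))%:E)
               <= (affine_iter a b (size h) m (F h))%:E)%E.
Proof.
move=> a0 b0 F0 step; elim=> [|m IH] h; first by rewrite /= cats0.
rewrite expect_hist_cons.
apply: le_trans (ge0_integral_mono _
  (g := fun w => (affine_iter a b (size h).+1 m (F (rcons h w)))%:E) _ _) _.
- by move=> w; apply: expect_hist_ge0 => h'; rewrite lee_fin.
- move=> w; have := IH (rcons h w); rewrite size_rcons.
  by under eq_fun => h' do rewrite cat_rcons.
under eq_integral => w _ do rewrite affine_iterE.
rewrite /= [X in (_ <= X%:E)%E]affine_iterE.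
apply: step; last exact: affine_iter_ge0.
by apply: prodr_ge0 => i _.
Qed.

End Expectation.

(* The constants M and Q of the recursion, for the step size c = 2 / nu. *)
Definition contraction_const {R : numFieldType} (delta Lc nu : R) : R :=
  2 * delta ^+ 2 * Lc ^+ 2 * (2 / nu) ^+ 2.
Definition noise_const {R : realType} {V : normedModType R} (delta : R)
    (gL : V -> V) (sigma nu : R) (thstar : V) : R :=
  delta * (2 / nu) ^+ 2 / 2 * (sigma ^+ 2 + 2 * `|gL thstar| ^+ 2).

Section OneStep.
Context {R : realType} {V : normedModType R} {ip : V -> V -> R}.
Context {J : V -> \bar R} {delta : R}.
Context {dO : measure_display} {Om : measurableType dO} {P : probability Om R}.
Context {L : V -> R} {gL : V -> V} {g : V -> Om -> V}.
Context {Lc sigma nu : R} {thstar : V}.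
Hypotheses (Hip : is_inner_product ip) (d0 : 0 < delta).
Hypotheses (cJ : convex_fun J) (pJ : proper_fun J).
Hypothesis gmeas : forall th, borel_measurable_to (g th).
Hypothesis gint : forall th h, P.-integrable setT (fun w => (ip (g th w) h)%:E).
Hypothesis gmean :
  forall th h, (\int[P]_w (ip (g th w) h)%:E = (ip (gL th) h)%:E)%E.
Hypothesis Lip : forall th th', `|gL th - gL th'| <= Lc * `|th - th'|.
Hypothesis gvar :
  forall th, (\int[P]_w (`|g th w - gL th| ^+ 2)%:E <= (sigma ^+ 2)%:E)%E.
Hypothesis nu0 : 0 < nu.
Hypothesis strongL : forall th tht v, subdiff ip (Jdelta J delta) th v ->
  ((L th + ip (gL th) (tht - th))%:E
   + nu%:E * bregman ip (Jdelta J delta) v tht th <= (L tht)%:E)%E.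
Hypothesis Lmin : forall th, L thstar <= L th.
Hypothesis fstar : J thstar \is a fin_num.

Lemma contraction_const_ge0 : 0 <= contraction_const delta Lc nu.
Proof.
exact: mulr_ge0 (mulr_ge0 (mulr_ge0 (ler0n _ 2) (sqr_ge0 _)) (sqr_ge0 _)) (sqr_ge0 _).
Qed.

Lemma noise_const_gt0 : 0 < sigma -> 0 < noise_const delta gL sigma nu thstar.
Proof.
move=> s0; have := sqr_ge0 `|gL thstar|; have := exprn_gt0 2 s0.
rewrite /noise_const => ? ?; apply: mulr_gt0; last by lra.
by rewrite divr_gt0 // mulr_gt0 // exprn_gt0 // divr_gt0.
Qed.

Lemma grad_sqr_le_bregman {th v} : subdiff ip (Jdelta J delta) th v ->
  `|gL th| ^+ 2 <= 2 * `|gL thstar| ^+ 2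
                   + 4 * delta * Lc ^+ 2 * bregmanR ip J delta v thstar th.
Proof.
move=> sub; have dist := bregmanR_lb Hip d0 cJ pJ sub fstar.
have lip := Lip th thstar.
have lip2 := ler_pM (normr_ge0 _) (normr_ge0 _) lip lip.
rewrite -!expr2 exprMn [`|th - thstar|]distrC in lip2.
have := sqr_norm_le (gL th) (gL thstar).
have : Lc ^+ 2 * `|thstar - th| ^+ 2
       <= Lc ^+ 2 * (2 * delta * bregmanR ip J delta v thstar th).
  by rewrite ler_wpM2l ?sqr_ge0 // -ler_pdivrMl ?mulr_gt0 // mulrC.
lra.
Qed.

(* Deterministic part of the step: (D) and minimality of theta* turn the
   averaged linear term into a contraction. *)
Lemma descent_bound th v (n : R) : subdiff ip (Jdelta J delta) th v -> 0 < n ->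
  bregmanR ip J delta v thstar th + 2 / nu / n * ip (gL th) (thstar - th)
  + noise_weight delta (2 / nu / n) * (`|gL th| ^+ 2 + sigma ^+ 2)
  <= Num.max 0 (1 - 2 / n + contraction_const delta Lc nu / n ^+ 2)
     * bregmanR ip J delta v thstar th
     + noise_const delta gL sigma nu thstar / n ^+ 2.
Proof.
move=> sub n0; set tau := 2 / nu / n; set kap := noise_weight delta tau.
set D := bregmanR ip J delta v thstar th.
have fth := subdiff_fin pJ sub.
have decrease : ip (gL th) (thstar - th) <= - (nu * D).
  have := strongL _ thstar _ sub; rewrite bregmanE // -EFinM -EFinD lee_fin -/D.
  by have := Lmin th; lra.
have tau_dec : tau * ip (gL th) (thstar - th) <= - (2 / n) * D.
  have -> : - (2 / n) * D = tau * (- (nu * D)).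
    by rewrite /tau; field; rewrite !lt0r_neq0.
  by rewrite ler_wpM2l // divr_ge0 ?divr_ge0 // ltW.
have grad := grad_sqr_le_bregman sub; rewrite -/D in grad.
have kap0 : 0 <= kap := noise_weight_ge0 (ltW d0).
have noise := ler_wpM2l kap0 (lerD grad (lexx (sigma ^+ 2))).
have split_noise :
    kap * (2 * `|gL thstar| ^+ 2 + 4 * delta * Lc ^+ 2 * D + sigma ^+ 2)
    = noise_const delta gL sigma nu thstar / n ^+ 2
      + contraction_const delta Lc nu / n ^+ 2 * D.
  rewrite /kap /noise_weight /tau /noise_const /contraction_const.
  by field; rewrite !lt0r_neq0.
have amax : 1 - 2 / n + contraction_const delta Lc nu / n ^+ 2
    <= Num.max 0 (1 - 2 / n + contraction_const delta Lc nu / n ^+ 2).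
  by rewrite le_max lexx orbT.
have D0 : 0 <= D := bregmanR_ge0 Hip d0 cJ pJ sub fstar.
have := ler_wpM2r D0 amax.
lra.
Qed.

Lemma one_step_expectation th v (th' : Om -> V) (k : nat) (A B : R) :
  let tau := 2 / nu / k.+1%:R in
  subdiff ip (Jdelta J delta) th v ->
  (forall w, subdiff ip (Jdelta J delta) (th' w) (v - tau *: g th w)) ->
  0 <= A -> 0 <= B ->
  (\int[P]_w (A * bregmanR ip J delta (v - tau *: g th w) thstar (th' w) + B)%:E
   <= (A * (step_contraction (contraction_const delta Lc nu) k
            * bregmanR ip J delta v thstar th
            + step_noise (noise_const delta gL sigma nu thstar) k) + B)%:E)%E.
Proof.
move=> tau sub sub' A0 B0; set kap := noise_weight delta tau.
have kap0 : 0 <= kap := noise_weight_ge0 (ltW d0).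
set U := fun w => bregmanR ip J delta v thstar th - kap * `|gL th| ^+ 2
  + ip (g th w) (tau *: (thstar - th) + (2 * kap) *: gL th)
  + kap * `|g th w - gL th| ^+ 2.
apply: le_trans (ge0_integral_mono P (g := fun w => (A * U w + B)%:E) _ _) _.
- move=> w; rewrite lee_fin addr_ge0 ?mulr_ge0 //.
  exact: (bregmanR_ge0 Hip d0 cJ pJ (sub' w) fstar).
- move=> w; rewrite lee_fin lerD2r ler_wpM2l //.
  exact: (bregman_step Hip d0 cJ pJ sub (sub' w)).
apply: le_trans (integral_step_bound Hip (gmeas th) (gint th) (gmean th)
  (gvar th) A0 kap0) _.
rewrite lee_fin lerD2r ler_wpM2l //.
by apply: descent_bound; rewrite ?ltr0n.
Qed.

End OneStep.

Theorem corollary3p6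
  (R : realType) (V : completeNormedModType R) (ip : V -> V -> R)
  (J : V -> \bar R) (delta : R)
  (dO : measure_display) (Om : measurableType dO) (P : probability Om R)
  (L : V -> R) (gL : V -> V) (g : V -> Om -> V)
  (Lc sigma nu : R) (thstar th0 v0 : V) :
  (* Theta is a real Hilbert space *)
  is_inner_product ip ->
  0 < delta ->
  (* (R) *)
  convex_fun J -> proper_fun J -> lsc_fun J ->
  (* L Frechet differentiable with gradient gL; g unbiased estimator *)
  frechet_gradient ip L gL ->
  (forall th, borel_measurable_to (g th)) ->
  (forall th h, P.-integrable setT (fun w => (ip (g th w) h)%:E)) ->
  (forall th h, (\int[P]_w (ip (g th w) h)%:E = (ip (gL th) h)%:E)%E) ->
  (* (A) *)
  (forall th, 0 <= L th) -> continuous gL -> 0 < Lc ->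
  (forall th th', `|gL th - gL th'| <= Lc * `|th - th'|) ->
  (* (B) *)
  0 < sigma ->
  (forall th, (\int[P]_w (`|g th w - gL th| ^+ 2)%:E <= (sigma ^+ 2)%:E)%E) ->
  (* (D) *)
  0 < nu ->
  (forall th tht v, subdiff ip (Jdelta J delta) th v ->
     ((L th + ip (gL th) (tht - th))%:E
        + nu%:E * bregman ip (Jdelta J delta) v tht th <= (L tht)%:E)%E) ->
  (* thstar is the unique minimizer of L, and J(thstar) < oo *)
  (forall th, L thstar <= L th) ->
  (forall th, (forall t, L th <= L t) -> th = thstar) ->
  (J thstar < +oo)%E ->
  (* initialization *)
  subdiff ip (Jdelta J delta) th0 v0 ->
  exists c C : R, 0 < c /\ 0 < C /\
    forall (theta v : seq Om -> V),
      theta [::] = th0 -> v [::] = v0 ->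
      (forall h w, v (rcons h w)
                   = v h - (c / (size h).+1%:R) *: g (theta h) w) ->
      (forall h w, is_prox (fun t => delta%:E * J t)%E
                     (delta *: v (rcons h w)) (theta (rcons h w))) ->
      forall k : nat,
        (expect_hist P k (fun h => bregman ip (Jdelta J delta) (v h) thstar (theta h))
         <= (C / k.+1%:R)%:E)%E.
Proof.
move=> Hip d0 cJ pJ _ _ gmeas gint gmean _ _ _ Lip s0 gvar nu0 strongL Lmin _
  /(fin_of_ltey pJ) fstar sub0.
set M := contraction_const delta Lc nu.
set Q := noise_const delta gL sigma nu thstar.
set D := fun th v => bregmanR ip J delta v thstar th.
have D0 th v : subdiff ip (Jdelta J delta) th v -> 0 <= D th v.
  by move=> sub; exact: (bregmanR_ge0 Hip d0 cJ pJ sub fstar).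
have Q0 : 0 < Q := noise_const_gt0 d0 nu0 s0.
have [C [C0 rate]] :=
  affine_iter_rate M Q (D th0 v0) contraction_const_ge0 Q0 (D0 _ _ sub0).
exists (2 / nu), C; split; first by rewrite divr_gt0.
split=> // theta v theta0 v0E vS prox k.
have sub h : subdiff ip (Jdelta J delta) (theta h) (v h).
  case/lastP: h => [|h w]; first by rewrite theta0 v0E.
  exact: (prox_subdiff Hip d0 cJ pJ (prox h w)).
have -> : (fun h => bregman ip (Jdelta J delta) (v h) thstar (theta h))
        = (fun h => (D (theta ([::] ++ h)) (v ([::] ++ h)))%:E).
  by apply: funext => h; rewrite bregmanE //; exact: (subdiff_fin pJ (sub h)).
apply: le_trans (expect_hist_affine (F := fun h => D (theta h) (v h))
  (step_contraction_ge0 M) (step_noise_ge0 (ltW Q0)) _ _ k [::]) _.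
- by move=> h; apply: D0.
- move=> h A B A0 B0; under eq_integral => w _ do rewrite vS.
  apply: (one_step_expectation Hip d0 cJ pJ gmeas gint gmean Lip gvar nu0
    strongL Lmin fstar) => // w.
  by rewrite -vS.
by rewrite /= theta0 v0E lee_fin; exact: rate.
Qed.
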